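(* Fix a constant $\alpha\ge 1$. Let $T$ be the uncompressed octree over $[0,U]^3$, with $U$ a power of $2$. For each node $u$ of $T$, let $P(u)$ be defined as in the context. Then every $\alpha$-fat axis-parallel box $R$ with integer corner coordinates in $[0,U]$ satisfies $R\in P(u)$ for at most $O(1)$ nodes $u$ of $T$, where the constant depends only on $\alpha$.
   Context: The uncompressed octree $T$ over $[0,U]^3$ is the complete tree in which the root has cell $\mathrm{cell}(\text{root})=[0,U]^3$. Every node whose cell has side length greater than $1$ has eight children, whose cells are the eight equal octants of its cell. For a node $u$, the set $P(u)$ consists of all boxes $R$ such that (i) $R$ contains at least one corner (vertex) of $\mathrm{cell}(u)$, and (ii) $R$ contains no corner of $\mathrm{cell}(w)$ for any proper ancestor $w$ of $u$. Boxes are closed. An axis-parallel box is $\alpha$-fat if the ratio of its longest edge length to its shortest edge length is at most $\alpha$. *)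

From Stdlib Require Import Reals Arith List.
Open Scope R_scope.

(* A node at level j has cell [a 2^j,(a+1) 2^j] x [b 2^j,(b+1) 2^j] x [c 2^j,(c+1) 2^j]
   (side length 2^j); the root is the unique node of level k, leaves have level 0. *)
Record node : Type := mkNode { lvl : nat; ia : nat; ib : nat; ic : nat }.

Definition valid_node (k : nat) (u : node) : Prop :=
  (lvl u <= k)%nat /\
  (ia u < 2 ^ (k - lvl u))%nat /\ (ib u < 2 ^ (k - lvl u))%nat /\
  (ic u < 2 ^ (k - lvl u))%nat.

(* w is a proper ancestor of u in the tree: the children of (j,a,b,c) are the
   (j-1, 2a+e1, 2b+e2, 2c+e3), so the ancestor of u at level j' > lvl u is
   obtained by integer division of the indices by 2^(j' - lvl u). *)
Definition proper_ancestor (k : nat) (w u : node) : Prop :=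
  (lvl u < lvl w)%nat /\ (lvl w <= k)%nat /\
  ia w = Nat.div (ia u) (2 ^ (lvl w - lvl u)) /\
  ib w = Nat.div (ib u) (2 ^ (lvl w - lvl u)) /\
  ic w = Nat.div (ic u) (2 ^ (lvl w - lvl u)).

Definition is_corner (u : node) (x y z : nat) : Prop :=
  (x = ia u * 2 ^ lvl u \/ x = (ia u + 1) * 2 ^ lvl u)%nat /\
  (y = ib u * 2 ^ lvl u \/ y = (ib u + 1) * 2 ^ lvl u)%nat /\
  (z = ic u * 2 ^ lvl u \/ z = (ic u + 1) * 2 ^ lvl u)%nat.

Record box : Type := mkBox { x1 : nat; x2 : nat; y1 : nat; y2 : nat; z1 : nat; z2 : nat }.

Definition box_valid (k : nat) (Bx : box) : Prop :=
  (x1 Bx <= x2 Bx <= 2 ^ k)%nat /\ (y1 Bx <= y2 Bx <= 2 ^ k)%nat /\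
  (z1 Bx <= z2 Bx <= 2 ^ k)%nat.

Definition in_box (Bx : box) (x y z : nat) : Prop :=
  (x1 Bx <= x <= x2 Bx)%nat /\ (y1 Bx <= y <= y2 Bx)%nat /\ (z1 Bx <= z <= z2 Bx)%nat.

Definition edge_x (Bx : box) : R := INR (x2 Bx - x1 Bx).
Definition edge_y (Bx : box) : R := INR (y2 Bx - y1 Bx).
Definition edge_z (Bx : box) : R := INR (z2 Bx - z1 Bx).

(* alpha-fat: the ratio longest edge / shortest edge is at most alpha
   (for the ratio to be defined the shortest edge must be positive). *)
Definition fat (alpha : R) (B : box) : Prop :=
  0 < Rmin (edge_x B) (Rmin (edge_y B) (edge_z B)) /\
  Rmax (edge_x B) (Rmax (edge_y B) (edge_z B)) /
    Rmin (edge_x B) (Rmin (edge_y B) (edge_z B)) <= alpha.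

Definition inP (k : nat) (B : box) (u : node) : Prop :=
  (exists x y z, is_corner u x y z /\ in_box B x y z) /\
  (forall w, proper_ancestor k w u ->
     forall x y z, is_corner w x y z -> ~ in_box B x y z).

From Stdlib Require Import Reals Arith List Lia Lra Classical.
Open Scope R_scope.

(* Let s be the shortest edge of R, with 2^t <= s < 2^(t+1).  If R is in P(u), the
   level of u is at least t: otherwise every edge of R is at least the side of the
   parent cell, so the parent of u would also have a corner in R.  A corner of u lying
   in R is not a corner of the parent, so one of its coordinates is an odd multiple of
   the side 2^j of cell(u); any corner of a node of higher level is an even multiple
   there, so if both lie in R some edge of R is at least 2^j.  From level t + O(alpha)
   on all edges are shorter than the cell side, hence at most one such level carries
   nodes of P(R).  Finally, on each level j >= t the edges are below 2 alpha 2^j, so the indices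
   of the nodes of P(R) range over O(alpha) values per axis: O(alpha^4) nodes in all. *)

Section DyadicIntervals.
Local Open Scope nat_scope.

(* [is_corner u x y z] is [endpoint (ia u) (2 ^ lvl u) x /\ ...] up to conversion. *)
Definition endpoint (i X x : nat) : Prop := x = i * X \/ x = (i + 1) * X.

Lemma endpoint_pow2_divide (i J j x : nat) :
  j <= J -> endpoint i (2 ^ J) x -> Nat.divide (2 ^ j) x.
Proof.
  intros Hj Hx.
  assert (HJ : Nat.divide (2 ^ j) (2 ^ J)).
  { exists (2 ^ (J - j)); rewrite <- Nat.pow_add_r; f_equal; lia. }
  destruct Hx as [-> | ->]; exact (Nat.divide_mul_r _ _ _ HJ).
Qed.

Lemma endpoint_parent_in_interval (i X x lo hi : nat) :
  endpoint i X x -> lo <= x <= hi -> 2 * X <= hi - lo ->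
  exists x', endpoint (i / 2) (2 * X) x' /\ lo <= x' <= hi.
Proof.
  intros Hx Hb Hlen.
  pose proof (Nat.div_mod i 2 ltac:(lia)) as Hi.
  pose proof (Nat.mod_upper_bound i 2 ltac:(lia)).
  set (q := i / 2) in *; set (r := i mod 2) in *.
  assert (Hq : q * (2 * X) <= x <= q * (2 * X) + 2 * X).
  { assert (r = 0 \/ r = 1) as [Hr | Hr] by lia;
      rewrite Hr in Hi; destruct Hx as [-> | ->]; rewrite Hi; nia. }
  destruct (Nat.le_gt_cases lo (q * (2 * X))).
  - exists (q * (2 * X)); split; [left | lia]; reflexivity.
  - exists ((q + 1) * (2 * X)); split; [right; reflexivity | nia].
Qed.

Lemma endpoint_parent_of_divide (i X x : nat) :
  0 < X -> endpoint i X x -> Nat.divide (2 * X) x -> endpoint (i / 2) (2 * X) x.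
Proof.
  intros HX Hx [m Hm].
  pose proof (Nat.div_mod i 2 ltac:(lia)).
  pose proof (Nat.mod_upper_bound i 2 ltac:(lia)).
  set (q := i / 2) in *; set (r := i mod 2) in *.
  replace (m * (2 * X)) with (2 * m * X) in Hm by ring.
  destruct Hx as [Hx | Hx]; rewrite Hx in Hm |- *;
    apply Nat.mul_cancel_r in Hm; try lia.
  - left; replace q with m by lia; rewrite Hm; ring.
  - right; replace (q + 1) with m by lia; rewrite Hm; ring.
Qed.

Lemma divide_in_interval_gap (X x x' lo hi : nat) :
  Nat.divide X x -> Nat.divide (2 * X) x' -> ~ Nat.divide (2 * X) x ->
  lo <= x <= hi -> lo <= x' <= hi -> X <= hi - lo.
Proof.
  intros [a ->] [b ->] Hx Hb Hb'.
  assert (Hab : a <> 2 * b) by (intros ->; apply Hx; exists b; ring).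
  destruct (Nat.lt_gt_cases a (2 * b)) as [[Hlt | Hgt] _]; [exact Hab | |].
  - assert ((a + 1) * X <= 2 * b * X) by (apply Nat.mul_le_mono_r; lia); nia.
  - assert ((2 * b + 1) * X <= a * X) by (apply Nat.mul_le_mono_r; lia); nia.
Qed.

Lemma endpoint_index_window (i X x lo hi n : nat) :
  0 < X -> endpoint i X x -> lo <= x <= hi -> hi - lo < n * X ->
  lo / X <= i + 1 <= lo / X + n + 1.
Proof.
  intros HX Hx Hb Hlen.
  pose proof (Nat.div_mod lo X ltac:(lia)).
  pose proof (Nat.mod_upper_bound lo X ltac:(lia)).
  set (q := lo / X) in *; set (r := lo mod X) in *.
  assert (i * X <= x <= (i + 1) * X) by (destruct Hx as [-> | ->]; nia).
  split.
  - destruct (Nat.le_gt_cases q (i + 1)) as [| Hq]; [assumption |].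
    assert ((i + 2) * X <= q * X) by (apply Nat.mul_le_mono_r; lia); nia.
  - destruct (Nat.le_gt_cases i (q + n)) as [| Hq]; [lia |].
    assert ((q + n + 1) * X <= i * X) by (apply Nat.mul_le_mono_r; lia); nia.
Qed.

Lemma endpoint_levels_gap (i i' j j' x x' lo hi : nat) :
  j < j' -> endpoint i (2 ^ j) x -> endpoint i' (2 ^ j') x' ->
  ~ Nat.divide (2 ^ S j) x -> lo <= x <= hi -> lo <= x' <= hi -> 2 ^ j <= hi - lo.
Proof.
  intros Hj Hx Hx' Hn Hb Hb'.
  exact (divide_in_interval_gap _ _ _ _ _ (endpoint_pow2_divide _ _ _ _ (le_n j) Hx)
           (endpoint_pow2_divide _ _ _ _ Hj Hx') Hn Hb Hb').
Qed.

End DyadicIntervals.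

Definition min_edge (B : box) : nat :=
  Nat.min (x2 B - x1 B) (Nat.min (y2 B - y1 B) (z2 B - z1 B)).

Definition max_edge (B : box) : nat :=
  Nat.max (x2 B - x1 B) (Nat.max (y2 B - y1 B) (z2 B - z1 B)).

Lemma INR_min (m n : nat) : INR (Nat.min m n) = Rmin (INR m) (INR n).
Proof.
  destruct (Nat.le_ge_cases m n) as [H | H].
  - rewrite Nat.min_l, Rmin_left by (try apply le_INR; assumption); reflexivity.
  - rewrite Nat.min_r, Rmin_right by (try apply le_INR; assumption); reflexivity.
Qed.

Lemma INR_max (m n : nat) : INR (Nat.max m n) = Rmax (INR m) (INR n).
Proof.
  destruct (Nat.le_ge_cases m n) as [H | H].
  - rewrite Nat.max_r, Rmax_right by (try apply le_INR; assumption); reflexivity.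
  - rewrite Nat.max_l, Rmax_left by (try apply le_INR; assumption); reflexivity.
Qed.

Lemma fat_max_edge_le (alpha : R) (A : nat) (B : box) :
  alpha <= INR A -> fat alpha B ->
  (0 < min_edge B /\ max_edge B <= A * min_edge B)%nat.
Proof.
  unfold fat, edge_x, edge_y, edge_z.
  rewrite <- !INR_min, <- !INR_max; fold (min_edge B) (max_edge B).
  intros HA [Hmin Hratio]; split; [apply INR_lt; exact Hmin |].
  apply INR_le; rewrite mult_INR.
  apply (Rmult_le_compat_r (INR (min_edge B))) in HA; [| lra].
  unfold Rdiv in Hratio; apply (Rmult_le_compat_r (INR (min_edge B))) in Hratio; [| lra].
  rewrite Rmult_assoc, Rinv_l, Rmult_1_r in Hratio by lra; lra.
Qed.

Definition parent (u : node) : node :=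
  mkNode (S (lvl u)) (ia u / 2) (ib u / 2) (ic u / 2).

Section CornersInBox.
Local Open Scope nat_scope.
Variables (k : nat) (B : box).

Lemma parent_proper_ancestor (u : node) :
  lvl u < k -> proper_ancestor k (parent u) u.
Proof.
  intros Hk; unfold proper_ancestor, parent; cbn [lvl ia ib ic].
  replace (S (lvl u) - lvl u) with 1 by lia; repeat split; lia.
Qed.

Lemma inP_min_edge_lt (u : node) :
  box_valid k B -> valid_node k u -> inP k B u -> min_edge B < 2 ^ S (lvl u).
Proof.
  intros HB [Hk _] [[x [y [z [[Cx [Cy Cz]] [Bx [By Bz]]]]]] Hanc].
  unfold min_edge; rewrite Nat.pow_succ_r'.
  destruct (Nat.lt_ge_cases (lvl u) k) as [Hlt | Hge].
  - apply Nat.nle_gt; intros Hedges.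
    destruct (endpoint_parent_in_interval _ _ _ _ _ Cx Bx ltac:(lia)) as [x' [Cx' Bx']].
    destruct (endpoint_parent_in_interval _ _ _ _ _ Cy By ltac:(lia)) as [y' [Cy' By']].
    destruct (endpoint_parent_in_interval _ _ _ _ _ Cz Bz ltac:(lia)) as [z' [Cz' Bz']].
    exact (Hanc (parent u) (parent_proper_ancestor u Hlt) x' y' z'
             (conj Cx' (conj Cy' Cz')) (conj Bx' (conj By' Bz'))).
  - pose proof (Nat.pow_nonzero 2 k ltac:(lia)).
    replace (lvl u) with k by lia; unfold box_valid in HB; lia.
Qed.

Lemma inP_corner_unaligned (u : node) (x y z : nat) :
  lvl u < k -> inP k B u -> is_corner u x y z -> in_box B x y z ->
  ~ Nat.divide (2 ^ S (lvl u)) x \/ ~ Nat.divide (2 ^ S (lvl u)) y \/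
  ~ Nat.divide (2 ^ S (lvl u)) z.
Proof.
  intros Hlt [_ Hanc] [Cx [Cy Cz]] Hb.
  pose proof (Nat.pow_nonzero 2 (lvl u) ltac:(lia)).
  destruct (classic (Nat.divide (2 ^ S (lvl u)) x)) as [Dx | Dx]; [| now left].
  destruct (classic (Nat.divide (2 ^ S (lvl u)) y)) as [Dy | Dy]; [| now right; left].
  right; right; intros Dz.
  apply (Hanc (parent u) (parent_proper_ancestor u Hlt) x y z); [| exact Hb].
  split; [| split]; apply endpoint_parent_of_divide with (X := 2 ^ lvl u);
    trivial; lia.
Qed.

Lemma inP_levels_separated (u v : node) :
  valid_node k v -> inP k B u -> inP k B v -> lvl u < lvl v -> 2 ^ lvl u <= max_edge B.
Proof.
  intros [Hvk _] Hu [[x' [y' [z' [[Cx' [Cy' Cz']] [Bx' [By' Bz']]]]]] _] Hlt.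
  pose proof Hu as [[x [y [z [Cu Bu]]]] _].
  destruct (inP_corner_unaligned u x y z ltac:(lia) Hu Cu Bu) as [Hn | [Hn | Hn]];
    destruct Cu as [Cx [Cy Cz]], Bu as [Bx [By Bz]]; unfold max_edge.
  - pose proof (endpoint_levels_gap _ _ _ _ _ _ _ _ Hlt Cx Cx' Hn Bx Bx'); lia.
  - pose proof (endpoint_levels_gap _ _ _ _ _ _ _ _ Hlt Cy Cy' Hn By By'); lia.
  - pose proof (endpoint_levels_gap _ _ _ _ _ _ _ _ Hlt Cz Cz' Hn Bz Bz'); lia.
Qed.

End CornersInBox.

Section Counting.
Local Open Scope nat_scope.
Variables (k A : nat) (B : box).
Hypotheses (HB : box_valid k B) (Hmin : 0 < min_edge B)
  (Hmax : max_edge B <= A * min_edge B).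

Let t := Nat.log2 (min_edge B).

Lemma inP_level_ge (u : node) : valid_node k u -> inP k B u -> t <= lvl u.
Proof.
  intros Hu HP; apply Nat.lt_succ_r, Nat.log2_lt_pow2; [exact Hmin |].
  exact (inP_min_edge_lt k B u HB Hu HP).
Qed.

Lemma max_edge_lt_level (j : nat) : t <= j -> max_edge B < 2 * A * 2 ^ j.
Proof.
  intros Hj.
  destruct (Nat.log2_spec _ Hmin) as [_ Hs]; fold t in Hs; rewrite Nat.pow_succ_r' in Hs.
  pose proof (Nat.pow_le_mono_r 2 _ _ ltac:(lia) Hj).
  assert (0 < A) by (destruct A; unfold min_edge, max_edge in *; lia).
  assert (A * min_edge B < A * (2 * 2 ^ t)) by (apply Nat.mul_lt_mono_pos_l; lia).
  assert (A * (2 * 2 ^ t) <= A * (2 * 2 ^ j)) by (apply Nat.mul_le_mono_l; lia).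
  lia.
Qed.

Lemma max_edge_lt_high_level (j : nat) : t + A + 1 <= j -> max_edge B < 2 ^ j.
Proof.
  intros Hj.
  destruct (Nat.log2_spec _ Hmin) as [_ Hs]; fold t in Hs.
  pose proof (Nat.pow_le_mono_r 2 (A + S t) j ltac:(lia) ltac:(lia)) as Hpow.
  rewrite Nat.pow_add_r in Hpow.
  pose proof (Nat.pow_gt_lin_r 2 A ltac:(lia)).
  pose proof (Nat.pow_nonzero 2 (S t) ltac:(lia)).
  assert (A * min_edge B <= A * 2 ^ S t) by (apply Nat.mul_le_mono_l; lia).
  assert (A * 2 ^ S t < 2 ^ A * 2 ^ S t) by (apply Nat.mul_lt_mono_pos_r; lia).
  lia.
Qed.

(* All levels above t + A share one code, as at most one of them carries nodes of P(B). *)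
Definition level_code (u : node) : nat := Nat.min (lvl u - t) (A + 1).

Definition offset (lo X i : nat) : nat := i + 1 - lo / X.

Definition code (u : node) : nat * nat * nat * nat :=
  (level_code u, offset (x1 B) (2 ^ lvl u) (ia u),
   offset (y1 B) (2 ^ lvl u) (ib u), offset (z1 B) (2 ^ lvl u) (ic u)).

Definition codes : list (nat * nat * nat * nat) :=
  list_prod (list_prod (list_prod (seq 0 (A + 2)) (seq 0 (2 * A + 2)))
    (seq 0 (2 * A + 2))) (seq 0 (2 * A + 2)).

Lemma inP_index_windows (u : node) : valid_node k u -> inP k B u ->
  x1 B / 2 ^ lvl u <= ia u + 1 <= x1 B / 2 ^ lvl u + 2 * A + 1 /\
  y1 B / 2 ^ lvl u <= ib u + 1 <= y1 B / 2 ^ lvl u + 2 * A + 1 /\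
  z1 B / 2 ^ lvl u <= ic u + 1 <= z1 B / 2 ^ lvl u + 2 * A + 1.
Proof.
  intros Hu HP; set (X := 2 ^ lvl u).
  pose proof (max_edge_lt_level _ (inP_level_ge u Hu HP)) as Hedge; fold X in Hedge.
  assert (HX : 0 < X) by (pose proof (Nat.pow_nonzero 2 (lvl u)); unfold X; lia).
  destruct HP as [[x [y [z [[Cx [Cy Cz]] [Bx [By Bz]]]]]] _].
  unfold max_edge in Hedge.
  repeat split; first
    [ apply (endpoint_index_window _ _ _ _ (x2 B) (2 * A) HX Cx Bx); lia
    | apply (endpoint_index_window _ _ _ _ (y2 B) (2 * A) HX Cy By); lia
    | apply (endpoint_index_window _ _ _ _ (z2 B) (2 * A) HX Cz Bz); lia ].
Qed.

Lemma code_in_codes (u : node) : valid_node k u -> inP k B u -> In (code u) codes.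
Proof.
  intros Hu HP; pose proof (inP_index_windows u Hu HP).
  unfold code, codes, level_code, offset; rewrite !in_prod_iff, !in_seq; lia.
Qed.

Lemma inP_level_code_inj (u v : node) :
  valid_node k u -> inP k B u -> valid_node k v -> inP k B v ->
  level_code u = level_code v -> lvl u = lvl v.
Proof.
  assert (Hlow : forall u v, valid_node k u -> inP k B u -> valid_node k v -> inP k B v ->
            level_code u = level_code v -> ~ lvl u < lvl v).
  { intros u' v' Hu' Pu Hv' Pv Hcode Hlt.
    pose proof (inP_level_ge u' Hu' Pu).
    assert (Hhigh : t + A + 1 <= lvl u') by (unfold level_code in Hcode; lia).
    pose proof (inP_levels_separated k B u' v' Hv' Pu Pv Hlt).
    pose proof (max_edge_lt_high_level _ Hhigh); lia. }
  intros Hu Pu Hv Pv Hcode.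
  destruct (Nat.lt_total (lvl u) (lvl v)) as [Hlt | [Heq | Hgt]]; [| exact Heq |].
  - exfalso; exact (Hlow u v Hu Pu Hv Pv Hcode Hlt).
  - exfalso; exact (Hlow v u Hv Pv Hu Pu (eq_sym Hcode) Hgt).
Qed.

Lemma code_inj (u v : node) :
  valid_node k u -> inP k B u -> valid_node k v -> inP k B v ->
  code u = code v -> u = v.
Proof.
  intros Hu Pu Hv Pv Hcode; injection Hcode as Hl Hx Hy Hz.
  pose proof (inP_level_code_inj u v Hu Pu Hv Pv Hl) as Hlvl.
  pose proof (inP_index_windows u Hu Pu); pose proof (inP_index_windows v Hv Pv).
  unfold offset in *; rewrite Hlvl in *.
  destruct u as [lu au bu cu], v as [lv av bv cv]; cbn in *.
  f_equal; lia.
Qed.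

Lemma inP_count (l : list node) :
  NoDup l -> (forall u, In u l -> valid_node k u /\ inP k B u) ->
  length l <= (A + 2) * (2 * A + 2) ^ 3.
Proof.
  intros Hnd Hl.
  replace ((A + 2) * (2 * A + 2) ^ 3) with (length codes)
    by (unfold codes; rewrite !length_prod, !length_seq; simpl; ring).
  rewrite <- (length_map code l); apply NoDup_incl_length.
  - apply NoDup_map_NoDup_ForallPairs; [| exact Hnd].
    intros u v Hu Hv; destruct (Hl u Hu), (Hl v Hv); apply code_inj; assumption.
  - intros c Hc; apply in_map_iff in Hc as [u [<- Hu]].
    destruct (Hl u Hu); apply code_in_codes; assumption.
Qed.

End Counting.

Theorem mainTheorem8 :
  forall alpha : R, 1 <= alpha ->
  exists C : nat,
    forall (k : nat) (B : box),
      box_valid k B -> fat alpha B ->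
      forall l : list node,
        NoDup l ->
        (forall u, In u l -> valid_node k u /\ inP k B u) ->
        (length l <= C)%nat.
Proof.
  (* [1 <= alpha] is already forced by [fat alpha B]. *)
  intros alpha _.
  destruct (INR_unbounded alpha) as [A HA].
  exists ((A + 2) * (2 * A + 2) ^ 3)%nat.
  intros k B HB Hfat.
  destruct (fat_max_edge_le alpha A B (Rlt_le _ _ HA) Hfat) as [Hmin Hmax].
  exact (inP_count k A B HB Hmin Hmax).
Qed.
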